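(* Let $m$ and $d$ be positive integers with $m\ge3$. There exist a positive integer $N=N(m,d)$ and a block $B=(b_1,\ldots,b_N)\in\{0,1,\ldots,m-1\}^N$ such that for any real polynomial $P$ of degree $d$ and any sequence $(\eta_n)_n$ of real numbers with $|\eta_n|\le 1/20$ for all $n$, there exists $n\in[1,N]$ such that \[\lfloor P(n)+\eta_n\rfloor\not\equiv b_n\pmod m.\] *)

From HB Require Import structures.
From mathcomp Require Export all_boot all_order all_algebra.
From mathcomp Require Export Rstruct.
Set Implicit Arguments. Unset Strict Implicit. Unset Printing Implicit Defensive.
Export Order.TTheory GRing.Theory Num.Theory.

Notation Real := Rdefinitions.R.

From mathcomp Require Import zify ring lra.

(* Modulo m, floor (P n + eta n) does not change when an integer multiple of m
   is added to a coefficient of P, so the coefficients of P may be taken in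
   [0, m).  Rounding them down to the grid (1/M)Z, with M = 4 (d+1) N^d, moves
   P n by at most 1/4 for n in [1, N]; as |eta n| <= 1/20, floor (P n + eta n)
   is then floor (Q n - 1/2) or one more, for a grid polynomial Q.  Hence the
   residue blocks of length N that occur are among (m M)^(d+1) 2^N patterns,
   which is less than m^N for N large, and any other block works. *)

Set Implicit Arguments.
Unset Strict Implicit.
Unset Printing Implicit Defensive.

Lemma sqr_le_exp2 u : (4 <= u -> u * u <= 2 ^ u)%N.
Proof.
elim: u => // u IHu; rewrite leq_eqVlt => /orP [/eqP <- // | ].
rewrite ltnS expnS => /[dup] /IHu; nia.
Qed.

Lemma exp2_gt_linear a b : exists u, (a * u + b < 2 ^ u)%N.
Proof. by exists (a + b + 4); have := @sqr_le_exp2 (a + b + 4); lia. Qed.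

Lemma exp3_gt_poly_exp2 c k : exists N, (0 < N)%N /\ (c * N ^ k * 2 ^ N < 3 ^ N)%N.
Proof.
(* With N = 4 * 2^u, the bound 2^6 <= 3^4 gives 2^(N/2) * 2^N <= 3^N. *)
have [u ltu] := exp2_gt_linear k (c + 2 * k).
exists (2 ^ u.+2); split; first by rewrite expn_gt0.
have ltc : (c * (2 ^ u.+2) ^ k < 2 ^ (2 ^ u.+1))%N.
  rewrite -expnM; apply: (@leq_trans (2 ^ (c + u.+2 * k)));
    first by rewrite expnD ltn_pmul2r ?expn_gt0 // ltn_expl.
  by rewrite leq_exp2l // expnS; lia.
have le23 : (2 ^ (2 ^ u.+1) * 2 ^ (2 ^ u.+2) <= 3 ^ (2 ^ u.+2))%N.
  have -> : (2 ^ u.+1 = 2 * 2 ^ u)%N by rewrite expnS.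
  have -> : (2 ^ u.+2 = 4 * 2 ^ u)%N by rewrite !expnS mulnA.
  by rewrite -expnD -mulnDl !expnM leq_exp2r ?expn_gt0.
by apply: leq_trans le23; rewrite ltn_pmul2r ?expn_gt0.
Qed.

Lemma few_patterns m d : (3 <= m)%N ->
  exists N, (0 < N)%N /\ ((m * (4 * d.+1 * N ^ d)) ^ d.+1 * 2 ^ N < m ^ N)%N.
Proof.
move=> m_ge3; have [N [N_gt0 ltN]] := exp3_gt_poly_exp2 ((4 * m * d.+1) ^ d.+1) (d * d.+1).
exists N; split => //; apply: leq_trans (_ : 3 ^ N <= m ^ N)%N; last by rewrite leq_exp2r.
have -> : ((m * (4 * d.+1 * N ^ d)) ^ d.+1 = (4 * m * d.+1) ^ d.+1 * N ^ (d * d.+1))%N.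
  by rewrite expnM -expnMn; congr (_ ^ _); ring.
exact: ltN.
Qed.

Lemma exists_notin_codom (aT rT : finType) (f : aT -> rT) :
  (#|aT| < #|rT|)%N -> exists y, y \notin codom f.
Proof.
move=> lt_card; apply/existsP; rewrite -negb_forall; apply: contraTN lt_card => /forallP in_f.
rewrite -leqNgt -(size_codom f); apply: leq_trans (card_size _).
by apply/subset_leq_card/subsetP => y _; apply: in_f.
Qed.

Local Open Scope ring_scope.

Lemma sum_coef_dist_le (R : realFieldType) d (r a : 'I_d.+1 -> R) (x y e : R) :
  1 <= x <= y -> (forall j, `|r j - a j| <= e) ->
  `|\sum_(j < d.+1) r j * x ^+ j - \sum_(j < d.+1) a j * x ^+ j| <= d.+1%:R * e * y ^+ d.
Proof.
case/andP=> x_ge1 le_xy near_ra.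
have x_ge0 : 0 <= x by apply: le_trans x_ge1.
rewrite -sumrB -mulrA mulr_natl -[d.+1 in X in _ <= X]card_ord -sumr_const.
apply: le_trans (ler_norm_sum _ _ _) (ler_sum _ _) => j _.
rewrite -mulrBl normrM [`|x ^+ j|]ger0_norm ?exprn_ge0 //.
apply: ler_pM; rewrite ?exprn_ge0 //; apply: le_trans (ler_weXn2l x_ge1 (ltnSE (ltn_ord j))) _.
by apply: lerXn2r; rewrite // nnegrE (le_trans x_ge0).
Qed.

Section Archimedean.
Variable R : archiRealFieldType.
Implicit Types (x a : R) (m : nat).

Lemma floor_near x a : `|x - a| < 1 / 2 ->
  exists b : bool, Num.floor x = Num.floor (a - 1 / 2) + b%:Z.
Proof.
rewrite ltr_norml => /andP [lo hi].
set k := Num.floor (a - 1 / 2).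
have := floor_le (a - 1 / 2); have := floorD1_gt (a - 1 / 2); rewrite -/k intrD => k_hi k_lo.
have ge_k : k <= Num.floor x by rewrite floor_ge_int; lra.
have lt_k2 : Num.floor x < k + 2 by rewrite floor_lt_int intrD; lra.
by exists (Num.floor x != k); case: eqP => [-> | ne]; [rewrite addr0 | lia].
Qed.

Lemma floorD_mulz_modz x m (z : int) :
  (Num.floor (x + (m%:Z * z)%:~R) %% m)%Z = (Num.floor x %% m)%Z.
Proof. by rewrite floorDrz ?intr_int // intrKfloor addrC mulrC modzMDl. Qed.

Lemma sub_floor_div_itv x m : (0 < m)%N ->
  0 <= x - (Num.floor (x / m%:R))%:~R * m%:R < m%:R.
Proof.
move=> m_gt0; have m_pos : 0 < m%:R :> R by rewrite ltr0n.
have := floor_le (x / m%:R); have := floorD1_gt (x / m%:R).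
rewrite intrD ler_pdivlMr // ltr_pdivrMr //.
by move=> hi lo; apply/andP; split; nra.
Qed.

Lemma horner_floor_modz_reduce m d (P : {poly R}) : (0 < m)%N -> (size P <= d.+1)%N ->
  exists2 r : 'I_d.+1 -> R, (forall j, 0 <= r j < m%:R) &
  forall (n : nat) (e : R), (Num.floor (P.[n%:R] + e) %% m)%Z =
                            (Num.floor (\sum_(j < d.+1) r j * n%:R ^+ j + e) %% m)%Z.
Proof.
move=> m_gt0 sizeP; pose q j := Num.floor (P`_j / m%:R).
exists (fun j => P`_j - (q j)%:~R * m%:R) => [j | n e]; first exact: sub_floor_div_itv.
rewrite -[RHS](floorD_mulz_modz _ m (\sum_(j < d.+1) q j * n%:Z ^+ j)).
congr (Num.floor _ %% _)%Z.
rewrite (horner_coef_wide _ sizeP) rmorphM rmorph_sum mulr_sumr addrAC -big_split /=.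
congr (_ + _); apply: eq_bigr => j _; rewrite rmorphM rmorphXn /=; ring.
Qed.

Lemma floor_grid_approx m M x : (0 < M)%N -> 0 <= x < m%:R ->
  exists k : 'I_(m * M), 0 <= x - k%:R / M%:R < M%:R^-1.
Proof.
move=> M_gt0 /andP [x_ge0 x_ltm]; have M_pos : 0 < M%:R :> R by rewrite ltr0n.
have f_ge0 : 0 <= Num.floor (x * M%:R) by rewrite floor_ge0 mulr_ge0.
have f_lt : (`|Num.floor (x * M%:R)|%N < m * M)%N.
  by rewrite -ltz_nat gez0_abs // floor_lt_int PoszM intrM ltr_pM2r.
exists (Ordinal f_lt); rewrite /= -[_%:R]/(Posz _)%:~R gez0_abs //.
have := floor_le (x * M%:R); have := floorD1_gt (x * M%:R); rewrite intrD.
set f := (Num.floor (x * M%:R))%:~R => hi lo.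
have -> : x - f / M%:R = (x * M%:R - f) / M%:R by field; rewrite gt_eqF.
by rewrite divr_ge0 ?subr_ge0 ?ler0n //= ltr_pdivrMr // mulVf ?gt_eqF //; lra.
Qed.

Definition grid_poly M {d K} (g : 'I_d.+1 -> 'I_K) (x : R) : R :=
  \sum_(j < d.+1) (g j)%:R / M%:R * x ^+ j.

Lemma floor_modz_near_grid m d M N (P : {poly R}) (eta : nat -> R) :
    (0 < m)%N -> (0 < M)%N -> (4 * d.+1 * N ^ d <= M)%N -> (size P <= d.+1)%N ->
    (forall n, `|eta n| <= 1 / 20) ->
  exists g : {ffun 'I_d.+1 -> 'I_(m * M)}, forall n, (1 <= n <= N)%N ->
  exists b : bool, (Num.floor (P.[n%:R] + eta n) %% m)%Z =
                   ((Num.floor (grid_poly M g n%:R - 1 / 2) + b%:Z) %% m)%Z.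
Proof.
move=> m_gt0 M_gt0 le_M sizeP small_eta.
have M_pos : 0 < M%:R :> R by rewrite ltr0n.
have [r r_itv P_modz] := horner_floor_modz_reduce m_gt0 sizeP.
have [g g_near] := fin_all_exists (fun j => floor_grid_approx M_gt0 (r_itv j)).
exists (finfun g) => n /andP [n_ge1 n_leN].
have grid_err : `|\sum_(j < d.+1) r j * n%:R ^+ j - grid_poly M (finfun g) n%:R| <= 1 / 4.
  apply: le_trans (sum_coef_dist_le (e := M%:R^-1) (y := N%:R) _ _) _.
  - by rewrite ler1n n_ge1 ler_nat.
  - move=> j; rewrite ffunE; have /andP [lo hi] := g_near j.
    by rewrite ger0_norm // ltW.
  - have : (4 * d.+1 * N ^ d)%:R <= M%:R :> R by rewrite ler_nat.
    rewrite mulrAC ler_pdivrMr // !natrM natrX -mulrA.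
    by move: (_ * _ ^+ d) => t; lra.
rewrite P_modz; set S := \sum_(j < d.+1) r j * n%:R ^+ j in grid_err *.
have /floor_near [b ->] : `|S + eta n - grid_poly M (finfun g) n%:R| < 1 / 2.
  rewrite addrAC; apply: le_lt_trans (ler_normD _ _) _.
  by have := small_eta n; lra.
by exists b.
Qed.

End Archimedean.

Lemma ltn_absz_modz m (z : int) : (0 < m)%N -> (`|(z %% m)%Z|%N < m)%N.
Proof. by move=> m_gt0; rewrite -ltz_nat gez0_abs ?modz_ge0 ?ltz_pmod // eqz_nat -lt0n. Qed.

Definition ord_modz m (m_gt0 : (0 < m)%N) (z : int) : 'I_m := Ordinal (ltn_absz_modz z m_gt0).

Lemma ord_modzE m (m_gt0 : (0 < m)%N) (z : int) : (ord_modz m_gt0 z)%:Z = (z %% m)%Z.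
Proof. by rewrite /= gez0_abs // modz_ge0 // eqz_nat -lt0n. Qed.

Theorem theorem6 (m d : nat) (hm : (3 <= m)%N) (hd : (0 < d)%N) :
  exists N : nat, (0 < N)%N /\
  exists b : nat -> 'I_m,
    forall (P : {poly Real}) (eta : nat -> Real),
      size P = d.+1 ->
      (forall n : nat, `|eta n| <= 1 / 20) ->
      exists n : nat, [/\ (1 <= n)%N, (n <= N)%N &
        ((Num.floor (P.[n%:R] + eta n)) %% (m%:Z))%Z != (nat_of_ord (b n))%:Z].
Proof.
have m_gt0 : (0 < m)%N by apply: leq_trans hm.
have [N [N_gt0 few]] := few_patterns d hm.
set M := (4 * d.+1 * N ^ d)%N in few.
have M_gt0 : (0 < M)%N by rewrite !muln_gt0 expn_gt0 N_gt0.
pose pattern (x : {ffun 'I_d.+1 -> 'I_(m * M)} * {ffun 'I_N -> bool}) :=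
  [ffun i : 'I_N =>
     ord_modz m_gt0 (Num.floor (grid_poly M x.1 (i.+1%:R : Real) - 1 / 2) + (x.2 i)%:Z)].
have [p p_miss] : exists p, p \notin codom pattern.
  by apply: exists_notin_codom; rewrite card_prod !card_ffun !card_ord card_bool.
exists N; split => //.
exists (fun n => if insub n.-1 is Some i then p i else Ordinal m_gt0).
move=> P eta sizeP small_eta.
have [g near_g] := floor_modz_near_grid m_gt0 M_gt0 (leqnn M) (eq_leq sizeP) small_eta.
have [bits near_bits] := fin_all_exists (fun i : 'I_N => near_g i.+1 (ltn_ord i)).
have /existsP [i p_neq] : [exists i, p i != pattern (g, finfun bits) i].
  apply: contraR p_miss => /existsPn eq_p; apply/codomP; exists (g, finfun bits).
  by apply/ffunP => i; apply/eqP; rewrite -[_ == _]negbK eq_p.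
exists i.+1; split => //=; rewrite valK near_bits -ord_modzE eqz_nat.
by rewrite eq_sym; move: p_neq; rewrite !ffunE.
Qed.
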